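(* Let $X$ be a compact metric space, $f\colon X\to X$ continuous, and $\bar x=(x_i)_{i\in\mathbb Z}$ a full orbit. Then $1\in\mathrm{Per}(\bar x)$, and $\mathrm{Per}(\bar x)$ is closed under taking (positive) divisors and least common multiples: if $k\in\mathrm{Per}(\bar x)$ and $d\mid k$ then $d\in\mathrm{Per}(\bar x)$, and if $m,n\in\mathrm{Per}(\bar x)$ then $\operatorname{lcm}(m,n)\in\mathrm{Per}(\bar x)$.
   Context: A full orbit is a sequence $\bar x=(x_i)_{i\in\mathbb Z}$ in $X$ with $f(x_i)=x_{i+1}$ for all $i$. $2^X$ is the space of nonempty closed subsets of $X$ with the Hausdorff metric, $2^f(C)=f(C)$. $\mathrm{Per}(\bar x)$ is the set of $k\in\mathbb N$ such that $\overline{\{x_{mk}:m\in\mathbb Z\}}$ is a periodic point of $2^f$ with fundamental period $k$. *)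

From HB Require Import structures.
From mathcomp Require Import all_boot all_order all_algebra.
From mathcomp Require Import all_classical all_reals all_analysis.
Set Implicit Arguments. Unset Strict Implicit. Unset Printing Implicit Defensive.
Import Order.TTheory GRing.Theory Num.Theory.
Local Open Scope classical_set_scope.
Local Open Scope ring_scope.

Definition full_orbit {X : Type} (f : X -> X) (x : int -> X) : Prop :=
  forall i : int, f (x i) = x (i + 1).

Definition hyper_map {X : Type} (f : X -> X) : set X -> set X :=
  fun C => f @` C.

Definition periodic_fund {T : Type} (g : T -> T) (a : T) (k : nat) : Prop :=
  (0 < k)%N /\ iter k g a = a /\
  (forall j : nat, (0 < j)%N -> (j < k)%N -> iter j g a <> a).

Definition sub_orbit_closure {X : topologicalType} (x : int -> X) (k : nat)
  : set X := closure [set x (m * k%:Z) | m in [set: int]].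

Definition Per {X : topologicalType} (f : X -> X) (x : int -> X) (k : nat)
  : Prop := periodic_fund (hyper_map f) (sub_orbit_closure x k) k.

From HB Require Import structures.
From mathcomp Require Import all_boot all_order all_algebra.
From mathcomp Require Import all_classical all_reals all_analysis.
From mathcomp Require Import ring lra zify.
Set Implicit Arguments. Unset Strict Implicit. Unset Printing Implicit Defensive.
Import Order.TTheory GRing.Theory Num.Theory.
Local Open Scope classical_set_scope.
Local Open Scope ring_scope.

(* Write C_k(s) for the closure of {x_(mk+s) : m in Z}, so Per(x) is about C_k(0).
   On a compact Hausdorff space 2^f commutes with closures, hence 2^f maps C_k(s)
   to C_k(s+1) and C_k(s) depends only on s mod k; thus k is in Per(x) iff
   C_k(j) <> C_k(0) for 0 < j < k, and C_k(t) = C_k(0) forces k | t.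
   An inclusion C_k(0) <= C_k(t) is already an equality: shifting it by t
   repeatedly gives C_k(0) <= C_k(t) <= ... <= C_k(kt) = C_k(0).
   Divisors: if d | k and C_d(j) = C_d(0) with 0 < j < d, the points x_(ak) all lie
   in the finite union of the C_k(rd+j), r < k/d; each of these is invariant under
   a |-> a+1, so one of them contains all x_(ak), i.e. C_k(0) <= C_k(rd+j), and
   k | rd+j contradicts d not dividing j.
   Lcm: if C_L(j) = C_L(0) with L = lcm(m,n), then C_p(0) <= C_p(j) for p = m, n,
   so m and n divide j. *)

Lemma closure_subset_closed (T : topologicalType) (A B : set T) :
  closed B -> A `<=` B -> closure A `<=` B.
Proof. by move=> /closure_id cB AB; rewrite cB; apply: closureS. Qed.

Lemma image_closure (T U : topologicalType) (f : T -> U) (A : set T) :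
  compact [set: T] -> hausdorff_space U -> continuous f ->
  f @` closure A = closure (f @` A).
Proof.
move=> cT hU cf; apply/seteqP; split.
  have : closure A `<=` f @^-1` closure (f @` A).
    apply: closure_subset_closed.
      by apply: preimage_closed; [move=> ? _; apply: cf | exact: closed_closure].
    by move=> a Aa; apply: subset_closure; exists a.
  by move=> sub _ [a /sub ? <-].
apply: closure_subset_closed; last exact/image_subset/subset_closure.
apply: compact_closed => //; apply: continuous_compact.
  exact: continuous_subspaceT.
by apply: (subclosed_compact _ cT) => //; exact: closed_closure.
Qed.

Lemma upward_closed_le (P : int -> Prop) (a b : int) :
  (forall c, P c -> P (c + 1)) -> a <= b -> P a -> P b.
Proof.
move=> up ab Pa.
have -> : b = a + (absz (b - a))%:Z by rewrite gez0_abs ?subr_ge0 //; ring.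
elim: (absz (b - a)) => [|n IH]; first by rewrite addr0.
by rewrite -addn1 PoszD addrA; apply: up.
Qed.

Lemma upward_closed_cover (q : nat) (P : nat -> int -> Prop) (N : int) :
  (forall r a, P r a -> P r (a + 1)) ->
  (forall a, a <= N -> exists2 r, (r < q)%N & P r a) ->
  exists2 r, (r < q)%N & forall a, P r a.
Proof.
move=> up; elim: q N => [|q IH] N cover; first by have [] := cover N (lexx N).
have [Pq_ray|] := pselect (forall a, a <= N -> P q a).
  exists q => // a; have [aN|Na] := lerP a N; first exact: Pq_ray.
  exact: upward_closed_le (up q) (ltW Na) (Pq_ray N (lexx N)).
move=> /existsNP [a0 /not_implyP [a0N notPq]].
have [r rq Pr] : exists2 r, (r < q)%N & forall a, P r a.
  apply: (IH a0) => a aa0; have [r] := cover a (le_trans aa0 a0N).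
  rewrite ltnS leq_eqVlt => /orP [/eqP -> Pqa|rq Pra]; last by exists r.
  by case: notPq; apply: upward_closed_le (up q) aa0 Pqa.
by exists r => //; apply: ltnW.
Qed.

Section CosetClosure.
Variables (X : topologicalType) (x : int -> X).

Definition coset_closure (k s : int) : set X :=
  closure [set x (m * k + s) | m in [set: int]].

Lemma sub_orbit_closureE (k : nat) : sub_orbit_closure x k = coset_closure k 0.
Proof.
rewrite /sub_orbit_closure /coset_closure; congr closure.
by apply/seteqP; split => _ [m _ <-]; exists m => //; rewrite addr0.
Qed.

Lemma coset_closure_mem (k s : int) : coset_closure k s (x s).
Proof. by apply: subset_closure; exists 0 => //; rewrite mul0r add0r. Qed.

Lemma coset_closureDM (k s c : int) :
  coset_closure k (s + c * k) = coset_closure k s.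
Proof.
rewrite /coset_closure; congr closure.
apply/seteqP; split => _ [m _ <-].
  by exists (m + c) => //; congr x; ring.
by exists (m - c) => //; congr x; ring.
Qed.

Lemma coset_closure_periodic (k s : int) :
  coset_closure k (s + k) = coset_closure k s.
Proof. by rewrite -{2}[k]mul1r coset_closureDM. Qed.

Lemma coset_closure_dvd_subset (p L : nat) (s : int) :
  (p %| L)%N -> coset_closure L s `<=` coset_closure p s.
Proof.
move=> /dvdnP [c ->]; apply: closureS => _ [m _ <-].
by exists (m * c%:Z) => //; rewrite PoszM mulrA.
Qed.

Lemma coset_closure_subset_bigcup (q d : nat) (j : int) : (0 < q)%N ->
  coset_closure d j `<=`
    \bigcup_(r in `I_q) coset_closure (q * d)%N (r%:Z * d%:Z + j).
Proof.
move=> q0; apply: closure_subset_closed.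
  by apply: closed_bigcup => [|r _]; [exact: finite_II | exact: closed_closure].
have qz : q%:Z != 0 by rewrite eqz_nat -lt0n.
move=> _ [b _ <-]; have rE : (absz (b %% q%:Z)%Z)%:Z = (b %% q%:Z)%Z.
  by rewrite gez0_abs // modz_ge0.
exists (absz (b %% q%:Z)%Z); first by rewrite /= -ltz_nat rE ltz_pmod ?ltz_nat.
apply: subset_closure; exists (b %/ q%:Z)%Z => //.
by rewrite rE PoszM {3}(divz_eq b q%:Z); congr x; ring.
Qed.

End CosetClosure.

Section HyperMap.
Variables (X : Type) (f : X -> X).

Lemma iter_hyper_map_subset (A B : set X) (n : nat) :
  A `<=` B -> iter n (hyper_map f) A `<=` iter n (hyper_map f) B.
Proof. by move=> AB; elim: n => [|n IH] //=; apply: image_subset. Qed.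

Lemma iter_hyper_map_mem (A : set X) (y : X) (n : nat) :
  A y -> iter n (hyper_map f) A (iter n f y).
Proof. by move=> Ay; elim: n => [|n IH] //=; exists (iter n f y). Qed.

Lemma full_orbit_iter (x : int -> X) (i : int) (n : nat) :
  full_orbit f x -> x (i + n%:Z) = iter n f (x i).
Proof.
move=> fo; elim: n => [|n IH]; first by rewrite addr0.
by rewrite iterS -IH fo -addn1 PoszD addrA.
Qed.

End HyperMap.

Section OrbitClosures.
Variables (X : topologicalType) (f : X -> X) (x : int -> X).
Hypotheses (cX : compact [set: X]) (hX : hausdorff_space X)
  (cf : continuous f) (fo : full_orbit f x).

Local Notation C := (coset_closure x).

Lemma hyper_map_coset_closure (k s : int) : hyper_map f (C k s) = C k (s + 1).
Proof.
rewrite /hyper_map /coset_closure image_closure //; congr closure.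
apply/seteqP; split => y.
  by move=> [_ [m _ <-] <-]; exists m => //; rewrite fo addrA.
by move=> [m _ <-]; exists (x (m * k + s)); [exists m | rewrite fo addrA].
Qed.

Lemma iter_hyper_map_coset_closure (k s : int) (n : nat) :
  iter n (hyper_map f) (C k s) = C k (s + n%:Z).
Proof.
elim: n => [|n IH]; first by rewrite addr0.
by rewrite iterS IH hyper_map_coset_closure -addn1 PoszD addrA.
Qed.

Lemma coset_closure_iter_period (k : nat) (s : int) (y : X) :
  C k s y -> C k s (iter k f y).
Proof.
by move=> /(iter_hyper_map_mem f k); rewrite iter_hyper_map_coset_closure coset_closure_periodic.
Qed.

Lemma coset_closure_shift_subset (k u v s : int) : 0 < k ->
  C k u `<=` C k v -> C k (u + s) `<=` C k (v + s).
Proof.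
move=> k0 uv; have s_pos : 0 <= s + `|s| * k.
  have : `|s| <= `|s| * k by rewrite ler_peMr // ?normr_ge0; lia.
  have := ler_norm (- s); rewrite normrN; lra.
have -> : s = (absz (s + `|s| * k))%:Z + (- `|s|) * k by rewrite gez0_abs //; ring.
rewrite !addrA !coset_closureDM -!iter_hyper_map_coset_closure.
exact: iter_hyper_map_subset.
Qed.

Lemma coset_closure_subset_eq (k : nat) (t : int) : (0 < k)%N ->
  C k 0 `<=` C k t -> C k 0 = C k t.
Proof.
move=> k0 sub; have kz : 0 < k%:Z by rewrite ltz_nat.
have chain (i : nat) : C k t `<=` C k (t * i.+1%:Z).
  elim: i => [|i IH]; first by rewrite mulr1.
  apply: subset_trans IH _.
  have := coset_closure_shift_subset (s := t * i.+1%:Z) kz sub.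
  by rewrite add0r -(addn1 i.+1) PoszD mulrDr mulr1 addrC.
apply/seteqP; split => //; have := chain k.-1.
by rewrite prednK // -[t * _]add0r coset_closureDM.
Qed.

Lemma PerP (k : nat) :
  Per f x k <-> (0 < k)%N /\ forall j : nat, (0 < j)%N -> (j < k)%N -> C k j <> C k 0.
Proof.
have iterE (n : nat) : iter n (hyper_map f) (C k 0) = C k n.
  by rewrite iter_hyper_map_coset_closure add0r.
have periodE : C k k = C k 0 by have := coset_closure_periodic x k 0; rewrite add0r.
rewrite /Per /periodic_fund sub_orbit_closureE iterE periodE.
split=> [[k0 [_ H]]|[k0 H]]; split=> //.
  by move=> j j0 jk; rewrite -iterE; apply: H.
by split=> // j j0 jk; rewrite iterE; apply: H.
Qed.

Lemma Per_coset_closure_dvd (k t : nat) :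
  Per f x k -> C k t = C k 0 -> (k %| t)%N.
Proof.
move=> /PerP [k0 notper] E; apply/negPn/negP => ndvd.
apply: (notper (t %% k)%N); [by rewrite lt0n | by rewrite ltn_pmod |].
by rewrite -E {2}(divn_eq t k) PoszD addrC PoszM coset_closureDM.
Qed.

Lemma Per1 : Per f x 1.
Proof. by apply/PerP; split=> // -[]. Qed.

Lemma Per_dvd (k d : nat) : Per f x k -> (0 < d)%N -> (d %| k)%N -> Per f x d.
Proof.
move=> Pk d0 /dvdnP [q kE]; have k0 : (0 < k)%N by case/PerP: Pk.
have q0 : (0 < q)%N by move: k0; rewrite kE muln_gt0 => /andP [].
apply/PerP; split=> // j j0 jd E.
pose P r a := C k (r%:Z * d%:Z + j%:Z) (x (a * k%:Z)).
have up r a : P r a -> P r (a + 1).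
  by rewrite /P mulrDl mul1r (full_orbit_iter _ _ fo); apply: coset_closure_iter_period.
have cover a : exists2 r, (r < q)%N & P r a.
  have : C d j (x (a * k%:Z)).
    rewrite E -(coset_closureDM x d 0 (a * q%:Z)) add0r kE PoszM mulrA.
    exact: coset_closure_mem.
  move=> /(coset_closure_subset_bigcup q0); rewrite -kE => -[r rq Pra].
  by exists r.
have [r rq Pr] := upward_closed_cover up (fun a _ => cover a) (N := 0).
have /coset_closure_subset_eq : C k 0 `<=` C k (r * d + j)%N.
  apply: closure_subset_closed; first exact: closed_closure.
  by move=> _ [a _ <-]; rewrite addr0 PoszD PoszM; apply: Pr.
move=> /(_ k0) /esym /(Per_coset_closure_dvd Pk).
rewrite kE => /(dvdn_trans (dvdn_mull q (dvdnn d))).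
rewrite dvdn_addr ?dvdn_mull // => /(dvdn_leq j0).
by rewrite leqNgt jd.
Qed.

Lemma Per_dvd_of_coset_closure_eq (p L j : nat) : (0 < L)%N ->
  Per f x p -> (p %| L)%N -> C L j = C L 0 -> (p %| j)%N.
Proof.
move=> L0 Pp pL E; apply: Per_coset_closure_dvd => //.
have p0 : (0 < p)%N by case/PerP: Pp.
apply/esym/coset_closure_subset_eq => //.
apply: closure_subset_closed; first exact: closed_closure.
move=> _ [a _ <-]; rewrite addr0.
rewrite -(coset_closureDM x p j a); apply: (coset_closure_dvd_subset pL).
have shift := @coset_closure_shift_subset L 0 j (a * p%:Z).
by apply: shift; rewrite ?ltz_nat ?E // add0r; apply: coset_closure_mem.
Qed.

Lemma Per_lcm (m n : nat) : Per f x m -> Per f x n -> Per f x (lcmn m n).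
Proof.
move=> Pm Pn; have m0 : (0 < m)%N by case/PerP: Pm.
have n0 : (0 < n)%N by case/PerP: Pn.
have L0 : (0 < lcmn m n)%N by rewrite lcmn_gt0 m0 n0.
apply/PerP; split=> // j j0 jL E.
have : (lcmn m n %| j)%N.
  by rewrite dvdn_lcm !(Per_dvd_of_coset_closure_eq L0 _ _ E) ?dvdn_lcml ?dvdn_lcmr.
by move/(dvdn_leq j0); rewrite leqNgt jL.
Qed.

End OrbitClosures.

Theorem proposition4p7 (R : realType) (X : metricType R) (f : X -> X)
    (x : int -> X) :
  compact [set: X] -> continuous f -> full_orbit f x ->
  Per f x 1 /\
  (forall k d : nat, Per f x k -> (0 < d)%N -> (d %| k)%N -> Per f x d) /\
  (forall m n : nat, Per f x m -> Per f x n -> Per f x (lcmn m n)).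
Proof.
move=> cX cf fo; have hX := @metric_hausdorff R X.
split; [exact: Per1 | split; [exact: Per_dvd | exact: Per_lcm]].
Qed.
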